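(* Let $G$ be a connected, finite, pointed, edge-ordered graph with distinguished vertex $v_0$, and let $T=(F\circ I'\circ\Theta)(G)$. Then the neighborhood ordering $\triangleleft$ of the distinguished point $v_0$ in $T$ is the lexicographic depth-first traversal of $G$: for vertices $u,v$ of $G$ with $v_0\to u$ and $v_0\to v$ in $T$, $v_0\to u\triangleleft v_0\to v$ in $T$ iff $u$ precedes $v$ in the lexicographic depth-first traversal of $G$ (and these targets are the vertices other than $v_0$, which comes first in the traversal).
   Context: A (directed) graph is $(V,\to)$ with $\to\subseteq V\times V$; $N(u)$ is the set of outgoing edges of $u$. A pointed graph has a distinguished vertex $v_0$; connected means every vertex is reachable by a path from $v_0$. A path is a finite sequence $v_1\to\cdots\to v_n$ of vertices joined by edges; proper if no vertex repeats; co-initial paths share their source; $\pi\sqsubset\sigma$ means $\pi$ is a proper prefix of $\sigma$. A finite edge-ordered graph is a finite graph with a strict linear order $\triangleleft$ on each neighborhood. Lexicographic path order: if $\pi\sqsubset\sigma$ then $\pi\prec\sigma$ (symmetrically); otherwise, with $\zeta$ the longest common prefix, $u$ its target and $v_1,v_2$ the next vertices, $\pi\prec\sigma$ iff $u\to v_1\triangleleft u\to v_2$. $\min(u\rightsquigarrow v)$ is the $\prec$-least proper path from $u$ to $v$. Lexicographic depth-first search on $G$: initialize a list $L=()$ and a stack $S=(v_0)$; while $S$ is nonempty, pop the top element $v$; if $v\in L$, continue; otherwise append $v$ to $L$ and push the vertices of $\partial v$ (neighbors of $v$ not in $L$) onto $S$ in reverse $\triangleleft$-order (so the $\triangleleft$-least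 ends on top). The lexicographic depth-first traversal is the order in which vertices are appended to $L$. Lex-homomorphisms, lex-graphs: a lex-homomorphism $h$ is a vertex map preserving edges, mapping exactly the distinguished vertex to the distinguished vertex, monotone on neighborhoods, and with $h(\min(u\rightsquigarrow v))=\min(h(u)\rightsquigarrow h(v))$; a lex-graph is a finite, pointed, connected, edge-ordered graph with $u\to v_1\triangleleft u\to v_2$ iff $\min(u\rightsquigarrow v_1)\prec\min(u\rightsquigarrow v_2)$. An arborescence is a pointed graph with a unique path $v_0\rightsquigarrow u$ for every $u$. Functors: $\Theta$ sends $G$ to the edge-ordered arborescence on the vertices of $G$ with the same distinguished vertex, containing $u\to v$ iff it is an edge of $\min(v_0\rightsquigarrow v)$ in $G$, with edge order inherited from $G$; $I'$ regards an edge-ordered arborescence as a lex-graph; $F$ sends a lex-graph $H$ to the graph on the same vertices and distinguished point with edge relation the transitive closure of that of $H$ and $u\to v_1\triangleleft u\to v_2$ iff $\min(u\rightsquigarrow v_1)\prec\min(u\rightsquigarrow v_2)$ in $H$. *)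

From mathcomp Require Import all_boot.
From Stdlib Require Import Relations.
Set Implicit Arguments. Unset Strict Implicit. Unset Printing Implicit Defensive.

Section Defs.
Variable V : finType.

(* A graph is given by an edge relation [e : rel V]; an edge order is
   [ord : V -> rel V], where [ord u a b] means  u -> a  <|  u -> b. *)

Definition edge_ordered (e : rel V) (ord : V -> rel V) : Prop :=
  forall u,
    (forall a, e u a -> ~~ ord u a a) /\
    (forall a b c, e u a -> e u b -> e u c -> ord u a b -> ord u b c -> ord u a c) /\
    (forall a b, e u a -> e u b -> a != b -> ord u a b || ord u b a).

(* A path  u = x_0 -> x_1 -> ... -> x_n  is represented by u and the list
   [x_1; ...; x_n].  Proper path from u to v: *)
(* Relations are Prop-valued here so that the same notions apply both to G
   (a [rel V], coerced) and to Theta(G) (defined as a Prop). *)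
Fixpoint ppath (e : V -> V -> Prop) (x : V) (p : seq V) : Prop :=
  match p with
  | [::] => True
  | y :: p' => e x y /\ ppath e y p'
  end.

Definition proper_path (e : V -> V -> Prop) (u v : V) (p : seq V) : Prop :=
  ppath e u p /\ uniq (u :: p) /\ last u p = v.

Fixpoint lexlt_from (ord : V -> rel V) (u : V) (p q : seq V) : bool :=
  match p, q with
  | [::], _ :: _ => true
  | _, [::] => false
  | a :: p', b :: q' => if a == b then lexlt_from ord a p' q' else ord u a b
  end.

Definition is_min_path (e : V -> V -> Prop) (ord : V -> rel V) (u v : V) (p : seq V) : Prop :=
  proper_path e u v p /\
  forall q, proper_path e u v q -> q <> p -> lexlt_from ord u p q.

(* Theta(G): u -> v iff it is an edge of min(v0 ~> v) in G; edge order inherited. *)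
Definition theta_edge (e : rel V) (ord : V -> rel V) (v0 : V) (x y : V) : Prop :=
  exists p, is_min_path e ord v0 y p /\
    exists p1 p2, v0 :: p = p1 ++ x :: y :: p2.

(* F(H): edges = transitive closure of H;  u -> a <| u -> b  iff
   min(u ~> a) < min(u ~> b) in H (H carries the order [ord] inherited from G). *)
Definition F_edge (eH : V -> V -> Prop) : V -> V -> Prop := clos_trans V eH.

Definition F_ord (eH : V -> V -> Prop) (ord : V -> rel V) (u a b : V) : Prop :=
  exists pa pb, is_min_path eH ord u a pa /\ is_min_path eH ord u b pb /\
                lexlt_from ord u pa pb.

(* The stack is a list with its top at
   the head.  When v is visited, its unvisited neighbours are pushed so that
   the <|-least one ends on top, i.e. the stack becomes (sorted dv) ++ S. *)
Definition push_nbrs (e : rel V) (ord : V -> rel V) (L : seq V) (v : V) : seq V :=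
  sort (fun a b => (a == b) || ord v a b) [seq w <- enum V | e v w & w \notin L].

Fixpoint lex_dfs_fuel (e : rel V) (ord : V -> rel V) (n : nat) (L S : seq V)
  : seq V :=
  match n with
  | 0 => L
  | n'.+1 =>
    match S with
    | [::] => L
    | v :: S' =>
      if v \in L then lex_dfs_fuel e ord n' L S'
      else lex_dfs_fuel e ord n' (rcons L v) (push_nbrs e ord (rcons L v) v ++ S')
    end
  end.

(* The fuel (#|V|+1)^2 bounds the number of loop iterations (at most #|V|^2
   pushes plus the initial one), so this is the complete traversal. *)
Definition lex_dfs (e : rel V) (ord : V -> rel V) (v0 : V) : seq V :=
  lex_dfs_fuel e ord (#|V|.+1 ^ 2) [::] [:: v0].

End Defs.

From Stdlib Require Import Relations IndefiniteDescription.
From mathcomp Require Import all_boot zify.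
Set Implicit Arguments. Unset Strict Implicit. Unset Printing Implicit Defensive.

(* Every prefix of a lexicographically least proper path min(v0 ~> v) is itself
   least, so these paths form a tree rooted at v0; this tree is Theta(G), and
   in F(Theta(G)) the point v0 sees every other vertex, ordered by comparing
   least paths.  The depth-first search lists the vertices in exactly that
   order: the least unvisited vertex w always has its tree parent visited, so
   w is pending in the stack segment pushed by that parent, and the pending
   segments, pushed along a single branch of the tree, put w first among the
   unvisited entries of the stack. *)

Lemma sort_pairwise_strict (T : eqType) (R : rel T) (s : seq T) :
  {in s & &, transitive R} -> {in s &, forall x y, x != y -> R x y || R y x} ->
  uniq s -> pairwise R (sort (fun x y => (x == y) || R x y) s).
Proof.
move=> Rtr Rtot us; set le := fun x y => (x == y) || R x y.
have le_tot : {in s &, total le}.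
  move=> x y xs ys; rewrite /le; case: (eqVneq x y) => //= nxy.
  exact: Rtot.
have le_tr : {in s & &, transitive le}.
  move=> y x z ys xs zs; rewrite /le => /orP[/eqP->//|xy] /orP[/eqP<-|yz].
    by rewrite xy orbT.
  by rewrite (Rtr y x z) ?orbT.
have all_s : all (mem s) (sort le s) by apply/allP => x; rewrite mem_sort.
have : pairwise le (sort le s) && pairwise [rel x y | x != y] (sort le s).
  rewrite -(sorted_pairwise_in le_tr) ?(sort_sorted_in le_tot) ?allss //.
  by rewrite -uniq_pairwise sort_uniq.
rewrite -pairwise_relI; apply: sub_pairwise => x y /andP[] /=.
by rewrite /le => /orP[/eqP->|//]; rewrite eqxx.
Qed.

Lemma ex_minimum (T : eqType) (R : rel T) (s : seq T) :
  {in s & &, transitive R} -> {in s &, forall x y, x != y -> R x y || R y x} ->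
  s != [::] -> exists2 x, x \in s & {in s, forall y, y != x -> R x y}.
Proof.
move=> Rtr Rtot s_nil; pose t := sort (fun x y => (x == y) || R x y) (undup s).
have t_s : t =i s by move=> x; rewrite mem_sort mem_undup.
have : pairwise R t.
  apply: sort_pairwise_strict (undup_uniq s).
    by move=> y x z; rewrite !mem_undup; apply: Rtr.
  by move=> x y; rewrite !mem_undup; apply: Rtot.
case: t t_s => [|x t'] t_s.
  by case: s s_nil {Rtr Rtot} t_s => // y s _ /(_ y); rewrite mem_head.
rewrite pairwise_cons => /andP[/allP Rx _]; exists x; first by rewrite -t_s mem_head.
by move=> y; rewrite -t_s inE => /orP[/eqP->|/Rx//]; rewrite eqxx.
Qed.

Lemma uniq_size_le_card (T : finType) (s : seq T) : uniq s -> size s <= #|T|.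
Proof. by move/card_uniqP <-; exact: max_card. Qed.

Lemma sorted_lt_index (T : eqType) (R : rel T) (s : seq T) :
  transitive R -> irreflexive R -> sorted R s ->
  {in s &, forall x y, R x y = (index x s < index y s)}.
Proof.
move=> Rtr Rirr s_sorted x y xs ys; apply/idP/idP; last exact: sorted_ltn_index.
move=> Rxy; rewrite ltnNge leq_eqVlt; apply/negP => /orP[/eqP yx|yx].
  by move: Rxy; rewrite (index_inj x ys xs yx) Rirr.
by have := Rtr _ _ _ Rxy (sorted_ltn_index Rtr s_sorted y x ys xs yx); rewrite Rirr.
Qed.

Fixpoint seqs_upto (T : finType) (k : nat) : seq (seq T) :=
  if k is k'.+1 then [::] :: [seq x :: s | x <- enum T, s <- seqs_upto T k']
  else [:: [::]].

Lemma mem_seqs_upto (T : finType) k (s : seq T) : size s <= k -> s \in seqs_upto T k.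
Proof.
elim: k s => [|k IH] [|x s] //= size_s.
by rewrite inE; apply/orP; right; apply: allpairs_f; rewrite ?mem_enum ?IH.
Qed.

Section PropPaths.
Variables (T : finType) (R : T -> T -> Prop).

Lemma ppath_rcons x p y : ppath R x (rcons p y) <-> ppath R x p /\ R (last x p) y.
Proof.
elim: p x => [|z p IH] x /=; first by split; [case | case].
by rewrite IH; split; [case=> ? [] | case=> [[]]].
Qed.

Lemma ppath_clos_trans x p : ppath R x p -> p != [::] -> clos_trans T R x (last x p).
Proof.
elim: p x => [|y [|z p] IH] x //= [Rxy p_path] _; first exact: t_step.
exact: t_trans (t_step _ _ _ _ Rxy) (IH _ p_path isT).
Qed.

End PropPaths.

Lemma ppath_path (T : finType) (e : rel T) x p : ppath e x p <-> path e x p.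
Proof.
elim: p x => [|y p IH] x //=; split; first by case=> -> /IH ->.
by case/andP=> -> /IH.
Qed.

Section LexOrder.
Variables (V : finType) (e : rel V) (ord : V -> rel V).
Local Notation lexlt := (lexlt_from ord).

Lemma lexlt_irr u p : lexlt u p p = false.
Proof. by elim: p u => [|a p IH] u //=; rewrite eqxx. Qed.

Lemma lexlt_prefix u p c r : lexlt u p (p ++ c :: r).
Proof. by elim: p u => [|a p IH] u //=; rewrite eqxx. Qed.

Lemma lexlt_diverge u c a b p q : a != b ->
  lexlt u (c ++ a :: p) (c ++ b :: q) = ord (last u c) a b.
Proof. by move=> nab; elim: c u => [|d c IH] u /=; rewrite ?(negbTE nab) ?eqxx. Qed.

Lemma lexlt_cases u p q : lexlt u p q ->
  (exists c r, q = p ++ c :: r) \/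
  (exists c a b p' q', [/\ p = c ++ a :: p', q = c ++ b :: q', a != b & ord (last u c) a b]).
Proof.
elim: p u q => [|a p IH] u [|b q] //=; first by left; exists b, q.
case: (eqVneq a b) => [<-|nab].
  case/IH => [[c [r ->]]|[c [x [y [p' [q' [-> -> nxy xy]]]]]]]; first by left; exists c, r.
  by right; exists (a :: c), x, y, p', q'.
by right; exists [::], a, b, p, q.
Qed.

Hypothesis ord_edge : edge_ordered e ord.

Lemma ord_irr u a : e u a -> ord u a a = false.
Proof. by move=> eua; have [irr _] := ord_edge u; apply/negbTE/irr. Qed.

Lemma ord_trans u a b c : e u a -> e u b -> e u c -> ord u a b -> ord u b c -> ord u a c.
Proof. by have [_ [tr _]] := ord_edge u; apply: tr. Qed.

Lemma ord_total u a b : e u a -> e u b -> a != b -> ord u a b || ord u b a.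
Proof. by have [_ [_ tot]] := ord_edge u; apply: tot. Qed.

Lemma lexlt_trans u p q r : path e u p -> path e u q -> path e u r ->
  lexlt u p q -> lexlt u q r -> lexlt u p r.
Proof.
elim: p u q r => [|a p IH] u [|b q] [|c r] //= /andP[ea pa] /andP[eb pb] /andP[ec pc].
case: (eqVneq a b) => [ab|nab].
  by subst b; case: (eqVneq a c) => [ac|_ _ ac //]; subst c; apply: IH.
case: (eqVneq b c) => [bc|nbc]; first by subst c; rewrite (negbTE nab) => ab _.
case: (eqVneq a c) => [ac|nac]; last exact: ord_trans.
by subst c => ab ba; have := ord_trans ea eb ea ab ba; rewrite ord_irr.
Qed.

Lemma lexlt_asym u p q : path e u p -> path e u q -> lexlt u p q -> lexlt u q p -> False.
Proof. by move=> pp pq pq' qp; have := lexlt_trans pp pq pp pq' qp; rewrite lexlt_irr. Qed.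

Lemma lexlt_total u p q : path e u p -> path e u q -> p != q -> lexlt u p q || lexlt u q p.
Proof.
elim: p u q => [|a p IH] u [|b q] //= /andP[ea pa] /andP[eb pb].
case: (eqVneq a b) => [ab|nab _]; last exact: ord_total.
by subst b; rewrite eqseq_cons eqxx; apply: IH.
Qed.

Lemma mem_push_nbrs L v w : (w \in push_nbrs e ord L v) = e v w && (w \notin L).
Proof. by rewrite mem_sort mem_filter mem_enum andbT. Qed.

Lemma push_nbrs_pairwise L v : pairwise (ord v) (push_nbrs e ord L v).
Proof.
set s := [seq w <- enum V | e v w & w \notin L].
have s_e : {in s, forall w, e v w} by move=> w; rewrite mem_filter => /andP[/andP[]].
apply: sort_pairwise_strict; last by rewrite filter_uniq ?enum_uniq.
  by move=> b a c /s_e eb /s_e ea /s_e ec; apply: ord_trans.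
by move=> a b /s_e ea /s_e eb; apply: ord_total.
Qed.

Lemma size_push_nbrs L v : size (push_nbrs e ord L v) <= #|V|.
Proof. by rewrite size_sort size_filter cardT count_size. Qed.

End LexOrder.

Section MinPaths.
Variables (V : finType) (e : rel V) (ord : V -> rel V).
Hypothesis ord_edge : edge_ordered e ord.
Local Notation lexlt := (lexlt_from ord).

Definition proper_pathb u v p := [&& path e u p, uniq (u :: p) & last u p == v].

Lemma proper_pathP u v p : proper_path e u v p <-> proper_pathb u v p.
Proof.
rewrite /proper_pathb; split; first by case=> /ppath_path -> [-> ->]; rewrite eqxx.
by case/and3P=> /ppath_path ? ? /eqP.
Qed.

Lemma proper_path_prefix u v p y q :
  proper_pathb u v (p ++ y :: q) -> proper_pathb u y (rcons p y).
Proof.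
case/and3P=> pq_path pq_uniq _; apply/and3P; split; last by rewrite last_rcons.
  by move: pq_path; rewrite -cat_rcons cat_path => /andP[].
by move: pq_uniq; rewrite -cat_rcons -cat_cons cat_uniq => /andP[].
Qed.

Lemma proper_path_rcons u v w p :
  proper_pathb u v p -> e v w -> w \notin u :: p -> proper_pathb u w (rcons p w).
Proof.
case/and3P=> p_path p_uniq /eqP p_last evw w_p; apply/and3P; split; last by rewrite last_rcons.
  by rewrite rcons_path p_path p_last.
by rewrite -rcons_cons rcons_uniq w_p.
Qed.

Lemma ex_min_path u v : connect e u v -> exists p, is_min_path e ord u v p.
Proof.
move=> /connectP[p0 p0_path p0_last].
have [p1 p1_proper] : exists p, proper_pathb u v p.
  rewrite p0_last; case: (shortenP p0_path) => p p_path p_uniq _.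
  by exists p; rewrite /proper_pathb p_path p_uniq eqxx.
pose s := [seq p <- seqs_upto V #|V| | proper_pathb u v p].
have s_proper p : p \in s = proper_pathb u v p.
  rewrite mem_filter andb_idr // => /and3P[_ /uniq_size_le_card p_size _].
  exact/mem_seqs_upto/ltnW.
have s_path : {in s, forall p, path e u p} by move=> p; rewrite s_proper => /and3P[].
have [|||p ps p_min] := @ex_minimum _ (lexlt u) s.
- by move=> q p r /s_path pq /s_path pp /s_path pr; apply: lexlt_trans.
- by move=> p q /s_path pp /s_path pq; apply: lexlt_total.
- by apply/eqP => s_nil; move: p1_proper; rewrite -s_proper s_nil.
exists p; split=> [|q /proper_pathP q_proper /eqP nqp].
  by apply/proper_pathP; rewrite -s_proper.
by apply: p_min; rewrite ?s_proper.
Qed.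

Section Rooted.
Variable v0 : V.
Hypothesis connected : forall v, connect e v0 v.

Definition minpath v : seq V :=
  proj1_sig (constructive_indefinite_description _ (ex_min_path (connected v))).

Lemma minpathP v : is_min_path e ord v0 v (minpath v).
Proof. by rewrite /minpath; case: constructive_indefinite_description. Qed.

Lemma minpath_proper v : proper_pathb v0 v (minpath v).
Proof. by apply/proper_pathP; case: (minpathP v). Qed.

Lemma minpath_path v : path e v0 (minpath v).
Proof. by case/and3P: (minpath_proper v). Qed.

Lemma minpath_uniq v : uniq (v0 :: minpath v).
Proof. by case/and3P: (minpath_proper v). Qed.

Lemma minpath_last v : last v0 (minpath v) = v.
Proof. by case/and3P: (minpath_proper v) => _ _ /eqP. Qed.

Lemma minpath_le v p : proper_pathb v0 v p -> p = minpath v \/ lexlt v0 (minpath v) p.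
Proof.
move=> p_proper; case: (eqVneq p (minpath v)) => [|npm]; [by left | right].
by case: (minpathP v) => _; apply; [apply/proper_pathP | apply/eqP].
Qed.

Lemma minpath_unique v p : is_min_path e ord v0 v p -> p = minpath v.
Proof.
case=> /proper_pathP p_proper p_min; case: (minpath_le p_proper) => // m_lt.
case: (eqVneq p (minpath v)) => // /eqP npm.
have p_lt := p_min _ (proj1 (minpathP v)) (nesym npm).
case/and3P: p_proper => p_path _ _.
by case: (lexlt_asym ord_edge (minpath_path v) p_path m_lt p_lt).
Qed.

Lemma minpath_root : minpath v0 = [::].
Proof.
have := minpath_proper v0; case: (minpath v0) => // a p /and3P[_ /= /andP[v0_p _] /eqP p_last].
by move: v0_p; rewrite -p_last mem_last.
Qed.

Lemma minpath_rcons u : u != v0 -> exists q, minpath u = rcons q u.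
Proof.
move=> nu; have := minpath_last u; case/lastP: (minpath u) => [/= uv0|q z].
  by rewrite uv0 eqxx in nu.
by rewrite last_rcons => ->; exists q.
Qed.

Definition lex_lt x y := lexlt v0 (minpath x) (minpath y).

Lemma lex_lt_irr x : lex_lt x x = false.
Proof. exact: lexlt_irr. Qed.

Lemma lex_lt_trans y x z : lex_lt x y -> lex_lt y z -> lex_lt x z.
Proof. exact: (lexlt_trans ord_edge (minpath_path x) (minpath_path y) (minpath_path z)). Qed.

Lemma lex_lt_asym x y : lex_lt x y -> lex_lt y x -> False.
Proof. exact: (lexlt_asym ord_edge (minpath_path x) (minpath_path y)). Qed.

Lemma lex_lt_total x y : x != y -> lex_lt x y || lex_lt y x.
Proof.
move=> nxy; apply: (lexlt_total ord_edge (minpath_path x) (minpath_path y)).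
by apply: contra nxy => /eqP mxy; rewrite -(minpath_last x) mxy minpath_last.
Qed.

Lemma proper_lex_lt y w q : proper_pathb v0 y q -> lexlt v0 q (minpath w) -> lex_lt y w.
Proof.
move=> q_proper q_lt; rewrite /lex_lt; case: (minpath_le q_proper) => [<- //|m_lt].
case/and3P: q_proper => q_path _ _.
exact: (lexlt_trans ord_edge (minpath_path y) q_path (minpath_path w) m_lt q_lt).
Qed.

Lemma mem_minpath z x : z \in minpath x -> z = x \/ lex_lt z x.
Proof.
move=> zx; case/splitPr m_eq: (minpath x) / zx => [s1 s2].
have := minpath_proper x; rewrite m_eq => mx_proper.
have z_proper := proper_path_prefix mx_proper.
case: s2 m_eq mx_proper => [|c r] m_eq mx_proper.
  by left; case/and3P: mx_proper => _ _ /eqP; rewrite last_cat.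
right; apply: proper_lex_lt z_proper _; rewrite m_eq -cat_rcons; exact: lexlt_prefix.
Qed.

Lemma minpath_belast w q : minpath w = rcons q w -> minpath (last v0 q) = q.
Proof.
move=> mw; set x := last v0 q.
have := minpath_proper w; rewrite mw /proper_pathb rcons_path -rcons_cons rcons_uniq.
case/and3P=> /andP[q_path exw] /andP[w_q q_uniq] _.
have q_proper : proper_pathb v0 x q by rewrite /proper_pathb q_path q_uniq eqxx.
have x_mx : x \in v0 :: minpath x by rewrite -{1}(minpath_last x) mem_last.
(* min(v0 ~> x) is no proper prefix of q, as x would repeat; if they diverge,
   following min(v0 ~> x) and stepping to w, or stopping at its first visit
   of w, yields a proper path to w below min(v0 ~> w). *)
case: (minpath_le q_proper) => // /lexlt_cases
  [[c [r q_eq]]|[c [a [b [p' [q' [mx_eq q_eq nab ab]]]]]]].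
  have x_cr : x \in c :: r by rewrite {1}/x q_eq last_cat /= mem_last.
  by move: q_uniq; rewrite q_eq -cat_cons cat_uniq => /and3P[_ /hasPn/(_ x x_cr)]; rewrite x_mx.
suff [t w_t] : exists t, proper_pathb v0 w (c ++ a :: t).
  have := proper_lex_lt (w := w) w_t.
  by rewrite mw q_eq rcons_cat rcons_cons lexlt_diverge // ab lex_lt_irr => /(_ isT).
have w_c : w \notin c by apply: contra w_q => w_c; rewrite q_eq inE mem_cat w_c orbT.
case: (boolP (w \in minpath x)) => [w_mx|w_mx].
  move: w_mx; rewrite mx_eq mem_cat (negbTE w_c) /= => w_ap.
  have := minpath_proper x; rewrite mx_eq.
  case/splitPr ap_eq : (a :: p') / w_ap => [s1 s2]; rewrite catA => /proper_path_prefix.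
  rewrite rcons_cat; case: s1 ap_eq => [|a1 s1] [-> _] w_t; first by exists [::].
  by exists (rcons s1 w).
exists (rcons p' w); rewrite -rcons_cons -rcons_cat -mx_eq.
apply: proper_path_rcons (minpath_proper x) exw _.
by rewrite inE negb_or w_mx andbT; apply: contra w_q => /eqP->; exact: mem_head.
Qed.

Local Notation theta := (theta_edge e ord v0).

Lemma theta_edgeP x y : theta x y <-> minpath y = rcons (minpath x) y.
Proof.
split=> [|mxy]; last first.
  exists (minpath y); split; first exact: minpathP.
  by exists (belast v0 (minpath x)), [::]; rewrite mxy -rcons_cons lastI minpath_last -!cats1 -catA.
case=> p [/minpath_unique -> [p1 [p2 m_eq]]].
have p2_nil : p2 = [::].
  case: p2 m_eq => // z p2 m_eq; have := minpath_uniq y.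
  rewrite m_eq cat_uniq => /and3P[_ _ /= /andP[_ /andP[+ _]]].
  have -> : y = last z p2.
    by rewrite -{1}(minpath_last y) -[last v0 _]/(last v0 (v0 :: minpath y)) m_eq last_cat.
  by rewrite mem_last.
subst p2; have ny : y != v0.
  by apply/eqP => yv0; move: m_eq; rewrite yv0 minpath_root; case: p1 => [|? []].
have [q mq] := minpath_rcons ny.
move: m_eq; rewrite mq -rcons_cons -[_ ++ _]cat_rcons cats1 => /rcons_inj[q_eq].
have -> : x = last v0 q by rewrite -[last v0 q]/(last v0 (v0 :: q)) q_eq last_rcons.
by rewrite (minpath_belast mq).
Qed.

Lemma theta_path_minpath q : ppath theta v0 q -> q = minpath (last v0 q).
Proof.
elim/last_ind: q => [|q y IH]; first by rewrite minpath_root.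
by rewrite last_rcons => /ppath_rcons[/IH q_eq /theta_edgeP ->]; rewrite -q_eq.
Qed.

Lemma minpath_theta_path u : ppath theta v0 (minpath u).
Proof.
have [q] : exists q, minpath u = q by exists (minpath u).
elim/last_ind: q u => [u -> //|q y IH] u mu.
have yu : y = u by rewrite -(minpath_last u) mu last_rcons.
subst y; have mq := minpath_belast mu.
rewrite mu; apply/ppath_rcons; split; first by rewrite -{1}mq; exact: IH mq.
by apply/theta_edgeP; rewrite mq.
Qed.

Lemma theta_min_path u p : is_min_path theta ord v0 u p <-> p = minpath u.
Proof.
split=> [[[/theta_path_minpath p_eq [_ <-]] _] //|->].
split=> [|q [/theta_path_minpath q_eq [_ q_last]]]; last by rewrite q_eq q_last.
by split; [exact: minpath_theta_path | split; [exact: minpath_uniq | exact: minpath_last]].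
Qed.

Lemma F_edge_root u : F_edge theta v0 u <-> u <> v0.
Proof.
split=> [|/eqP nu].
  suff gen a b : clos_trans V theta a b -> b <> v0 by apply: gen.
  elim=> [x y /theta_edgeP mxy yv0 | //].
  by move: mxy; rewrite yv0 minpath_root; case: (minpath x).
have [q mu] := minpath_rcons nu.
have := ppath_clos_trans (minpath_theta_path u); rewrite minpath_last; apply.
by rewrite mu -size_eq0 size_rcons.
Qed.

Lemma F_ord_root u v : F_ord theta ord v0 u v <-> lex_lt u v.
Proof.
split=> [[pu [pv [/theta_min_path -> [/theta_min_path -> //]]]]|uv].
by exists (minpath u), (minpath v); rewrite !theta_min_path.
Qed.

Section LexDFS.

(* The stack is kept as a list of frames (x, B), top first, where B is what
   remains of the neighbours pushed when x was visited.  [frames_chain] says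
   that the owners lie on one branch of the tree of least paths, each owner
   being reached from any lower one through a child that precedes every
   entry still pending in the lower frame. *)
Definition stack_of (fr : seq (V * seq V)) : seq V := flatten (map snd fr).

Definition frame_above (f g : V * seq V) : Prop :=
  exists c r, minpath f.1 = minpath g.1 ++ c :: r /\ {in g.2, forall b, ord g.1 c b}.

Fixpoint frames_chain (fr : seq (V * seq V)) : Prop :=
  if fr is f :: fr' then {in fr', forall g, frame_above f g} /\ frames_chain fr' else True.

Record dfs_inv (L : seq V) (fr : seq (V * seq V)) : Prop := DfsInv {
  dfs_head : exists L', L = v0 :: L';
  dfs_sorted : sorted lex_lt L;
  dfs_initial : forall x y, x \in L -> y \notin L -> lex_lt x y;
  dfs_frames : forall f, f \in fr ->
    [/\ f.1 \in L, {in f.2, forall b, e f.1 b} & pairwise (ord f.1) f.2];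
  dfs_cover : forall x y, x \in L -> e x y -> y \notin L ->
    exists2 f, f \in fr & f.1 = x /\ y \in f.2;
  dfs_chain : frames_chain fr }.

Lemma frame_mem_stack (fr : seq (V * seq V)) f y : f \in fr -> y \in f.2 -> y \in stack_of fr.
Proof. by move=> f_fr y_f; apply/flattenP; exists f.2; first exact: map_f. Qed.

Lemma stack_of_cons fr v S : stack_of fr = v :: S ->
  exists fa x B fb, fr = fa ++ (x, v :: B) :: fb /\ stack_of fa = [::].
Proof.
elim: fr => [|[x [|b B]] fr IH] //= => [/IH[fa [x' [B [fb [-> fa_nil]]]]] | [<- _]].
  by exists ((x, [::]) :: fa), x', B, fb.
by exists [::], x, B, fr.
Qed.

Lemma dfs_inv_drop L fa fr : dfs_inv L (fa ++ fr) -> stack_of fa = [::] -> dfs_inv L fr.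
Proof.
case=> L_head L_sorted L_initial frames cover chain fa_nil; split=> //.
- by move=> f f_fr; apply: frames; rewrite mem_cat f_fr orbT.
- move=> x y xL exy yL; have [f] := cover x y xL exy yL.
  rewrite mem_cat => /orP[f_fa [_ y_f]|]; last by exists f.
  by have := frame_mem_stack f_fa y_f; rewrite fa_nil.
- by elim: fa {frames cover fa_nil} chain => //= f fa IH [_ /IH].
Qed.

Lemma dfs_root L fr : dfs_inv L fr -> v0 \in L.
Proof. by case=> [[L' ->]] *; exact: mem_head. Qed.

Definition lex_least_outside (L : seq V) w := forall z, z \notin L -> z != w -> lex_lt w z.

Lemma ex_lex_least_outside (L : seq V) y :
  y \notin L -> exists2 w, w \notin L & lex_least_outside L w.
Proof.
move=> yL; have [||| w] := @ex_minimum _ lex_lt [seq z <- enum V | z \notin L].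
- by move=> ? ? ? _ _ _; apply: lex_lt_trans.
- by move=> ? ? _ _; apply: lex_lt_total.
- apply/eqP => unvisited_nil.
  have : y \in [seq z <- enum V | z \notin L] by rewrite mem_filter yL mem_enum.
  by rewrite unvisited_nil.
rewrite mem_filter => /andP[wL _] w_min; exists w => // z zL; apply: w_min.
by rewrite mem_filter zL mem_enum.
Qed.

Lemma lex_least_outside_parent (L : seq V) w : v0 \in L -> w \notin L -> lex_least_outside L w ->
  exists x, [/\ x \in L, e x w & minpath w = rcons (minpath x) w].
Proof.
move=> v0L wL w_min; have [q mw] : exists q, minpath w = rcons q w.
  by apply: minpath_rcons; apply: contraNneq wL => ->.
exists (last v0 q); rewrite (minpath_belast mw); split=> //; last first.
  by have := minpath_path w; rewrite mw rcons_path => /andP[].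
have xw : lex_lt (last v0 q) w by rewrite /lex_lt (minpath_belast mw) mw -cats1 lexlt_prefix.
have nxw : last v0 q != w by apply: contraTneq xw => ->; rewrite lex_lt_irr.
by apply/negPn/negP => xL; apply: lex_lt_asym xw (w_min _ xL nxw).
Qed.

Lemma lex_least_outside_below (L : seq V) w y q : lex_least_outside L w ->
  y \notin L -> proper_pathb v0 y q -> lexlt v0 q (minpath w) -> False.
Proof.
move=> w_min yL q_proper /(proper_lex_lt q_proper) yw.
case: (eqVneq y w) => [eyw|nyw]; first by rewrite eyw lex_lt_irr in yw.
exact: lex_lt_asym yw (w_min y yL nyw).
Qed.

Lemma minpath_visited L fr x : dfs_inv L fr -> x \in L -> {subset v0 :: minpath x <= L}.
Proof.
move=> inv xL z; rewrite inE => /orP[/eqP-> | /mem_minpath[-> // | zx]]; first exact: dfs_root inv.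
by apply/negPn/negP => zL; apply: lex_lt_asym zx (dfs_initial inv xL zL).
Qed.

Lemma dfs_next L x v B fb : dfs_inv L ((x, v :: B) :: fb) -> v \notin L ->
  lex_least_outside L v /\ minpath v = rcons (minpath x) v.
Proof.
(* The least unvisited w is pending in the frame of its tree parent; unless
   that is the top frame with w first, the path through v is below min(v0 ~> w). *)
move=> inv vL; have [w wL w_min] := ex_lex_least_outside vL.
have [xw [xwL exw mw]] := lex_least_outside_parent (dfs_root inv) wL w_min.
have /= [xL ex_vB /andP[/allP v_B _]] := dfs_frames inv (mem_head _ _).
have v_proper : proper_pathb v0 v (rcons (minpath x) v).
  apply: proper_path_rcons (minpath_proper x) (ex_vB v (mem_head _ _)) _.
  by apply: contra vL => /(minpath_visited inv xL).
have [f] := dfs_cover inv xwL exw wL; rewrite inE => /orP[/eqP-> /= [xxw w_vB] | f_fb [f_xw w_f]].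
  rewrite -xxw in mw; move: w_vB; rewrite inE => /orP[/eqP wv | w_B]; first by subst w.
  exfalso.
  have xvw := v_B w w_B.
  apply: (lex_least_outside_below w_min vL v_proper).
  rewrite mw -!cats1 lexlt_diverge ?minpath_last //.
  by apply: contraTneq xvw => <-; rewrite (ord_irr ord_edge (ex_vB _ (mem_head _ _))).
have [c [r [mx c_f]]] := (dfs_chain inv).1 f f_fb; rewrite f_xw in mx c_f.
have xwcw := c_f w w_f; exfalso; apply: (lex_least_outside_below w_min vL v_proper).
rewrite mx mw rcons_cat rcons_cons -[rcons _ w]cats1 lexlt_diverge ?minpath_last //.
by apply: contraTneq xwcw => ->; rewrite (ord_irr ord_edge exw).
Qed.

Lemma dfs_frames_pop L x v B fb f : dfs_inv L ((x, v :: B) :: fb) -> f \in (x, B) :: fb ->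
  [/\ f.1 \in L, {in f.2, forall b, e f.1 b} & pairwise (ord f.1) f.2].
Proof.
move=> inv; rewrite inE => /orP[/eqP-> | f_fb].
  have /= [xL ex_vB /andP[_ B_sorted]] := dfs_frames inv (mem_head _ _).
  by split=> // b b_B; apply: ex_vB; rewrite inE b_B orbT.
by apply: (dfs_frames inv); rewrite inE f_fb orbT.
Qed.

Lemma dfs_cover_pop L x v B fb x' y : dfs_inv L ((x, v :: B) :: fb) ->
  x' \in L -> e x' y -> y \notin L -> y != v ->
  exists2 f, f \in (x, B) :: fb & f.1 = x' /\ y \in f.2.
Proof.
move=> inv x'L ex'y yL nyv; have [f] := dfs_cover inv x'L ex'y yL.
rewrite inE => /orP[/eqP-> [/= xx' y_vB] | f_fb f_y]; last by exists f; rewrite // inE f_fb orbT.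
by exists (x, B); rewrite ?mem_head //; move: y_vB; rewrite inE (negbTE nyv).
Qed.

Lemma dfs_skip L x v B fb : dfs_inv L ((x, v :: B) :: fb) -> v \in L ->
  dfs_inv L ((x, B) :: fb).
Proof.
move=> inv vL; have [L_head L_sorted L_initial _ _ chain] := inv; split=> //.
- by move=> f; apply: dfs_frames_pop inv.
- move=> x' y x'L ex'y yL; apply: (dfs_cover_pop inv x'L ex'y yL).
  by apply: contraNneq yL => ->.
Qed.

Lemma dfs_visit L x v B fb : dfs_inv L ((x, v :: B) :: fb) -> v \notin L ->
  dfs_inv (rcons L v) ((v, push_nbrs e ord (rcons L v) v) :: (x, B) :: fb).
Proof.
move=> inv vL; have [[L' L_eq] L_sorted L_initial _ _ [x_above fb_chain]] := inv.
have [v_min mv] := dfs_next inv vL.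
have /= [_ _ /andP[/allP v_B _]] := dfs_frames inv (mem_head _ _).
have L_sub : {subset L <= rcons L v} by move=> z zL; rewrite mem_rcons inE zL orbT.
split.
- by exists (rcons L' v); rewrite L_eq.
- move: L_sorted; rewrite L_eq /= rcons_path => -> /=.
  by apply: L_initial vL; rewrite L_eq mem_last.
- move=> x' y; rewrite !mem_rcons !inE negb_or => /orP[/eqP-> | x'L] /andP[nyv yL].
    exact: v_min.
  exact: L_initial.
- move=> f; rewrite inE => /orP[/eqP-> | /(dfs_frames_pop inv)[f1L f2e f2_sorted]].
    split; [by rewrite mem_rcons mem_head | | exact: push_nbrs_pairwise].
    by move=> b; rewrite mem_push_nbrs => /andP[].
  by split=> //; apply: L_sub.
- move=> x' y; rewrite mem_rcons inE => /orP[/eqP-> evy yL | x'L ex'y].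
    by exists (v, push_nbrs e ord (rcons L v) v); rewrite ?mem_head //= mem_push_nbrs evy yL.
  rewrite mem_rcons inE negb_or => /andP[nyv yL].
  have [f f_fr f_y] := dfs_cover_pop inv x'L ex'y yL nyv.
  by exists f; rewrite // inE f_fr orbT.
- split=> [g|]; last by split.
  rewrite inE => /orP[/eqP-> | g_fb]; first by exists v, [::]; rewrite mv cats1.
  have [c [r [mx c_g]]] := x_above g g_fb.
  by exists c, (rcons r v); rewrite mv mx rcons_cat.
Qed.

Definition lex_traversal (R : seq V) : Prop :=
  [/\ exists R', R = v0 :: R', sorted lex_lt R & forall y, y \in R].

Lemma dfs_inv_traversal L fr : dfs_inv L fr -> stack_of fr = [::] -> lex_traversal L.
Proof.
move=> inv stack_nil; split; [exact: dfs_head inv | exact: dfs_sorted inv |].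
move=> y; apply/negPn/negP => yL; have [w wL w_min] := ex_lex_least_outside yL.
have [x [xL exw _]] := lex_least_outside_parent (dfs_root inv) wL w_min.
have [f f_fr [_ w_f]] := dfs_cover inv xL exw wL.
by have := frame_mem_stack f_fr w_f; rewrite stack_nil.
Qed.

Lemma lex_dfs_fuel_traversal n L fr : dfs_inv L fr ->
  size (stack_of fr) + #|V| * (#|V| - size L) <= n ->
  lex_traversal (lex_dfs_fuel e ord n L (stack_of fr)).
Proof.
(* A visit pushes at most #|V| entries and leaves one vertex fewer unvisited. *)
elim: n L fr => [|n IH] L fr inv; case stack_eq: (stack_of fr) => [|v S] //=;
  try by move=> _; apply: dfs_inv_traversal inv stack_eq.
have [fa [x [B [fb [fr_eq fa_nil]]]]] := stack_of_cons stack_eq.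
move: inv; rewrite fr_eq => /dfs_inv_drop/(_ fa_nil) inv.
have S_eq : S = stack_of ((x, B) :: fb).
  by move: stack_eq; rewrite fr_eq /stack_of map_cat flatten_cat -/(stack_of fa) fa_nil => -[].
case: ifP => [vL | /negbT vL] bound.
  by rewrite S_eq; apply: IH (dfs_skip inv vL) _; rewrite -S_eq.
set P := push_nbrs e ord (rcons L v) v.
have inv' := dfs_visit inv vL.
have stack_eq' : stack_of ((v, P) :: (x, B) :: fb) = P ++ S by rewrite S_eq.
rewrite -stack_eq'; apply: (IH _ _ inv'); rewrite stack_eq' size_cat size_rcons.
have P_size : size P <= #|V| := size_push_nbrs e ord (rcons L v) v.
have L_size : (size L).+1 <= #|V|.
  rewrite -(size_rcons L v); apply/uniq_size_le_card/(sorted_uniq lex_lt_trans lex_lt_irr).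
  exact: dfs_sorted inv'.
move: bound; set N := #|V|; set a := size L; nia.
Qed.

Lemma dfs_inv_start : dfs_inv [:: v0] [:: (v0, push_nbrs e ord [:: v0] v0)].
Proof.
split=> //; first by exists [::].
- move=> x y; rewrite !inE => /eqP-> nyv0; have [q mq] := minpath_rcons nyv0.
  by rewrite /lex_lt minpath_root mq; case: q {mq}.
- move=> f; rewrite inE => /eqP-> /=; split; [exact: mem_head | | exact: push_nbrs_pairwise].
  by move=> b; rewrite mem_push_nbrs => /andP[].
- move=> x y; rewrite inE => /eqP-> ev0y yL.
  by exists (v0, push_nbrs e ord [:: v0] v0); rewrite ?mem_head //= mem_push_nbrs ev0y.
Qed.

Lemma lex_dfs_traversal : lex_traversal (lex_dfs e ord v0).
Proof.
rewrite /lex_dfs; have -> : #|V|.+1 ^ 2 = (#|V| * #|V| + #|V|.*2).+1 by rewrite expnS expn1; nia.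
rewrite /=.
set P := push_nbrs e ord [:: v0] v0.
have -> : P ++ [::] = stack_of [:: (v0, P)] by [].
apply: lex_dfs_fuel_traversal dfs_inv_start _.
have P_size : size P <= #|V| := size_push_nbrs e ord [:: v0] v0.
have -> : size (stack_of [:: (v0, P)]) = size P by rewrite /stack_of /= cats0.
move: P_size; set N := #|V|; nia.
Qed.

End LexDFS.

End Rooted.

End MinPaths.

Theorem lemma9p1 (V : finType) (e : rel V) (ord : V -> rel V) (v0 : V) :
  edge_ordered e ord ->
  (forall v, connect e v0 v) ->
  let H := theta_edge e ord v0 in
  let L := lex_dfs e ord v0 in
  (forall u, F_edge H v0 u <-> u <> v0) /\
  (exists L', L = v0 :: L') /\ uniq L /\ (forall v, v \in L) /\
  (forall u v, F_edge H v0 u -> F_edge H v0 v ->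
     (F_ord H ord v0 u v <-> index u L < index v L)).
Proof.
move=> ord_edge connected H L; rewrite {}/H {}/L.
have [L_head L_sorted L_all] := lex_dfs_traversal ord_edge connected.
have lt_trans : transitive (lex_lt ord_edge connected) by move=> ? ? ?; apply: lex_lt_trans.
have lt_irr : irreflexive (lex_lt ord_edge connected) := lex_lt_irr ord_edge connected.
split; first exact: F_edge_root.
split=> //; split; first exact: sorted_uniq lt_trans lt_irr _ L_sorted.
split=> // u v _ _; rewrite -(sorted_lt_index lt_trans lt_irr L_sorted) ?L_all //.
exact: F_ord_root.
Qed.
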